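(* For every $k\in\{0,\dots,K\}$ with $\sigma_k<\lceil qn\rceil$, the function $\Psi_k^{\mathrm{BSAA}}$ is strictly positive on $(0,q)$ and on $(q,1)$, and $\log\Psi_k^{\mathrm{BSAA}}$ is strictly concave on $(0,q)$ and strictly concave on $(q,1)$ (i.e., $\Psi_k^{\mathrm{BSAA}}$ is strictly log-concave when restricted to $[0,q]$ and when restricted to $[q,1]$).
   Context: Fix $c_u,c_o>0$ and $q=c_u/(c_u+c_o)\in(0,1)$. Fix $K\ge1$, $\bm n=(n_1,\dots,n_K)\in\mathbb N^K$, $n=\sum_k n_k$, $\sigma_k=\sum_{\ell=1}^k n_\ell$ ($\sigma_0=0$). $B_{r,m}(p)=\sum_{j=r}^m\binom mj p^j(1-p)^{m-j}$ (with $B_{r,m}\equiv1$ if $r<0$). For $v\in[0,1]$, $\Psi_k^{\mathrm{BSAA}}(v)=\big(1-B_{\lceil qn\rceil-\sigma_k,\,n-\sigma_k}(v)\big)(v-q)+(q-v)^+$, where $y^+=\max\{y,0\}$. *)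

From HB Require Import structures.
From mathcomp Require Import all_boot all_order all_algebra.
From mathcomp Require Import all_classical all_reals all_analysis.
Set Implicit Arguments. Unset Strict Implicit. Unset Printing Implicit Defensive.
Import Order.TTheory GRing.Theory Num.Theory.
Local Open Scope ring_scope.

Definition Bbin {R : realType} (r : int) (m : nat) (p : R) : R :=
  if (r < 0)%R then 1
  else \sum_(j < m.+1 | (r <= j%:Z)%R) ('C(m, j))%:R * p ^+ j * (1 - p) ^+ (m - j).

(* sigma_k = n_1 + ... + n_k ; ns i (i : 'I_K, 0-indexed) is n_{i+1} *)
Definition sigma {K : nat} (ns : 'I_K -> nat) (k : nat) : nat :=
  \sum_(i < K | (i < k)%N) ns i.

Definition ntot {K : nat} (ns : 'I_K -> nat) : nat := \sum_(i < K) ns i.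

Definition PsiBSAA {R : realType} (q : R) {K : nat} (ns : 'I_K -> nat) (k : nat)
  (v : R) : R :=
  (1 - Bbin (Num.ceil (q * (ntot ns)%:R) - (sigma ns k)%:Z)
            (ntot ns - sigma ns k) v) * (v - q) + Num.max (q - v) 0.

Definition strictly_concave_on {R : realType} (f : R -> R) (a b : R) : Prop :=
  forall x y t : R, a < x < b -> a < y < b -> x != y -> 0 < t < 1 ->
    t * f x + (1 - t) * f y < f (t * x + (1 - t) * y).

From HB Require Import structures.
From mathcomp Require Import all_boot all_order all_algebra.
From mathcomp Require Import all_classical all_reals all_analysis.
From mathcomp Require Import ring lra zify.
Import Order.TTheory GRing.Theory Num.Theory.
Local Open Scope ring_scope.

(* Put m = n - sigma_k and r = ceil(qn) - sigma_k, so that 0 < r <= m.  On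
   (0, q), Psi(v) = (q - v) B_{r,m}(v); on (q, 1), Psi(v) = (v - q)(1 - B_{r,m}(v))
   = ((1 - q) - (1 - v)) B_{m+1-r,m}(1 - v).  Up to the reflection v |-> 1 - v
   both pieces are thus (c - v) B(v) with B an upper binomial tail, whose
   logarithmic derivative is -1/(c - v) + B'/B.  The derivative of the tail
   telescopes to B'(v) = r C(m,r) v^(r-1) (1-v)^(m-r), and B/B' is a sum of
   nonnegative multiples of v^(j-r+1) / (1-v)^(j-r), hence nondecreasing; so the
   logarithmic derivative is strictly decreasing, which gives strict concavity by
   the mean value theorem. *)

Section RealFunctions.
Context {R : realType}.
Implicit Types (a b c x y t : R) (f g df : R -> R).

Lemma convex_comb_in_oo a b x y t : a < x < b -> a < y < b -> 0 < t < 1 ->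
  a < t * x + (1 - t) * y < b.
Proof.
move=> /andP[ax xb] /andP[ay yb] /andP[t0 t1].
have t1' : 0 < 1 - t by rewrite subr_gt0.
apply/andP; split; rewrite -subr_gt0.
  have -> : t * x + (1 - t) * y - a = t * (x - a) + (1 - t) * (y - a) by ring.
  by rewrite addr_gt0 // mulr_gt0 // subr_gt0.
have -> : b - (t * x + (1 - t) * y) = t * (b - x) + (1 - t) * (b - y) by ring.
by rewrite addr_gt0 // mulr_gt0 // subr_gt0.
Qed.

Lemma strictly_concave_on_eq f g a b : (forall x, a < x < b -> f x = g x) ->
  strictly_concave_on g a b -> strictly_concave_on f a b.
Proof.
move=> fg cg x y t ax ay xy t01.
by rewrite !fg ?convex_comb_in_oo //; exact: cg.
Qed.

Lemma strictly_concave_on_reflect f a b c : strictly_concave_on f a b ->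
  strictly_concave_on (fun v => f (c - v)) (c - b) (c - a).
Proof.
have mem v : c - b < v < c - a -> a < c - v < b.
  by case/andP=> bv va; apply/andP; split; lra.
move=> cf x y t /mem ax /mem ay xy t01.
have -> : c - (t * x + (1 - t) * y) = t * (c - x) + (1 - t) * (c - y) by ring.
by apply: cf => //; apply: contra xy => /eqP cxy; apply/eqP; lra.
Qed.

Lemma MVT_oo {f df a b x y} :
  (forall v, a < v < b -> is_derive v 1 f (df v)) -> a < x -> x < y -> y < b ->
  exists2 c, x < c < y & f y - f x = df c * (y - x).
Proof.
move=> fdf ax xy yb.
have inab v : x <= v <= y -> a < v < b.
  by case/andP=> xv vy; rewrite (lt_le_trans ax xv) (le_lt_trans vy yb).
have fdf_xy v : v \in `]x, y[ -> is_derive v 1 f (df v).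
  by rewrite in_itv /= => /andP[/ltW xv /ltW vy]; apply/fdf/inab; rewrite xv.
have [|c] := MVT xy fdf_xy.
- apply: derivable_within_continuous => v /[!in_itv] /= /inab /fdf.
  by case.
- by rewrite in_itv /=; exists c.
Qed.

Lemma strictly_concave_on_derive f df a b :
  (forall x, a < x < b -> is_derive x 1 f (df x)) ->
  (forall x y, a < x -> x < y -> y < b -> df y < df x) ->
  strictly_concave_on f a b.
Proof.
move=> fdf df_decr x y t xab yab.
wlog xy : x y t xab yab / x < y.
  move=> wlog_xy xy_neq t01.
  case: (ltgtP x y) xy_neq => // [xy|yx] _.
    by apply: wlog_xy => //; rewrite lt_eqF.
  have t01' : 0 < 1 - t < 1 by case/andP: t01 => t0 t1; apply/andP; split; lra.
  have := wlog_xy y x (1 - t) yab xab yx (negbT (lt_eqF yx)) t01'.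
  have -> : 1 - (1 - t) = t by ring.
  by rewrite addrC (addrC ((1 - t) * y)).
move=> _ /andP[t0 t1]; case/andP: xab => ax _; case/andP: yab => _ yb.
set z := t * x + (1 - t) * y.
have xz : x < z by rewrite /z; nra.
have zy : z < y by rewrite /z; nra.
have [c1 /andP[xc1 c1z] fxz] := MVT_oo fdf ax xz (lt_trans zy yb).
have [c2 /andP[zc2 c2y] fzy] := MVT_oo fdf (lt_trans ax xz) zy yb.
have dfc : df c2 < df c1.
  by apply: df_decr; [exact: lt_trans xc1 | exact: lt_trans zc2 | exact: lt_trans yb].
have -> : t * f x + (1 - t) * f y = f z - t * (1 - t) * (y - x) * (df c1 - df c2).
  have -> : f x = f z - df c1 * (z - x) by rewrite -fxz; ring.
  have -> : f y = f z + df c2 * (y - z) by rewrite -fzy; ring.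
  rewrite /z; ring.
by rewrite gtrDl oppr_lt0 !mulr_gt0 ?subr_gt0.
Qed.

Lemma is_derive_ln_comp (g : R -> R) x dg :
  is_derive x 1 g dg -> 0 < g x -> is_derive x 1 (fun v => ln (g v)) ((g x)^-1 * dg).
Proof. by move=> dgx gx0; exact: is_derive1_comp (is_derive1_ln gx0) dgx. Qed.

Lemma expr_div_subr_expr_le (i j : nat) x y : 0 < x -> x <= y -> y < 1 ->
  x ^+ i / (1 - x) ^+ j <= y ^+ i / (1 - y) ^+ j.
Proof.
move=> x0 xy y1.
have y0 : 0 < y by exact: lt_le_trans xy.
have y1' : 0 < 1 - y by rewrite subr_gt0.
have x1' : 0 < 1 - x by rewrite subr_gt0 (le_lt_trans xy).
have yx : 1 - y <= 1 - x by rewrite lerD2l lerN2.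
apply: ler_pM.
- by rewrite exprn_ge0 // ltW.
- by rewrite invr_ge0 exprn_ge0 // ltW.
- by rewrite lerXn2r // ?nnegrE ltW.
- by rewrite lef_pV2 ?posrE ?exprn_gt0 // lerXn2r // ?nnegrE ltW.
Qed.

End RealFunctions.

Section BernsteinTail.
Context {R : realType}.
Implicit Types (m j r : nat) (v x y : R).

Definition bernstein m j v : R := 'C(m, j)%:R * v ^+ j * (1 - v) ^+ (m - j).

Definition bernstein_tail m r v : R :=
  \sum_(j < m.+1 | (r <= j)%N) bernstein m j v.

Definition bernstein_tail' m r v : R :=
  (r * 'C(m, r))%:R * v ^+ r.-1 * (1 - v) ^+ (m - r).

Lemma sum_bernstein m v : \sum_(j < m.+1) bernstein m j v = 1.
Proof.
have := exprDn (1 - v) v m; rewrite subrK expr1n => ->.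
by apply: eq_bigr => j _; rewrite /bernstein -mulr_natl; ring.
Qed.

Lemma bernstein_sym m j v : (j <= m)%N ->
  bernstein m (m - j) (1 - v) = bernstein m j v.
Proof.
move=> jm; rewrite /bernstein bin_sub // subKn //.
have -> : 1 - (1 - v) = v by ring.
by rewrite mulrAC.
Qed.

Lemma one_sub_bernstein_tail m r v : (r <= m.+1)%N ->
  1 - bernstein_tail m r v = bernstein_tail m (m.+1 - r) (1 - v).
Proof.
move=> rm; rewrite -{1}(sum_bernstein m v) /bernstein_tail.
rewrite (bigID (fun j : 'I_m.+1 => (r <= j)%N)) /= addrAC subrr add0r.
rewrite [RHS](reindex_inj rev_ord_inj) /=.
apply: eq_big => [j|j _]; last by rewrite subSS bernstein_sym // -ltnS.
by have := ltn_ord j; lia.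
Qed.

Lemma is_derive_bernstein m j v :
  is_derive v 1 (bernstein m j) (bernstein_tail' m j v - bernstein_tail' m j.+1 v).
Proof.
have dX n : is_derive v 1 (fun x : R => x ^+ n) (n%:R * v ^+ n.-1).
  by have := is_deriveX n (is_derive_id v 1); rewrite scaler1 -exprfctE.
have dXsub n : is_derive v 1 (fun x : R => (1 - x) ^+ n) (- (n%:R * (1 - v) ^+ n.-1)).
  have d1 : is_derive v 1 (fun x : R => 1 - x) (-1).
    have := @is_deriveB R R R (cst 1) id v 1 0 1 (is_derive_cst _ _ _) (is_derive_id _ _).
    by rewrite sub0r.
  by have := is_deriveX n d1; rewrite scalerN /GRing.scale /= mulr1 exprfctE.
apply: (is_derive_eq (is_deriveM (is_deriveM (is_derive_cst ('C(m, j)%:R : R) v 1)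
  (dX j)) (dXsub (m - j)%N))).
rewrite /bernstein_tail' mul_bin_left subnS !natrM /=.
rewrite -[(_ * _) v]/(_ * v ^+ j) /GRing.scale /=; ring.
Qed.

Lemma is_derive_bernstein_tail m r v : (r <= m)%N ->
  is_derive v 1 (bernstein_tail m r) (bernstein_tail' m r v).
Proof.
move=> rm.
have -> : bernstein_tail m r =
    \sum_(j < m.+1) (fun x => if (r <= j)%N then bernstein m j x else 0).
  by apply/funext => x; rewrite fct_sumE /bernstein_tail big_mkcond.
apply: is_derive_eq.
  apply: (is_derive_sum (dh := fun j : 'I_m.+1 => if (r <= j)%N
    then bernstein_tail' m j v - bernstein_tail' m j.+1 v else 0)) => j.
  by case: ifP => _; [exact: is_derive_bernstein | exact: is_derive_cst].
rewrite -big_mkcond.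
have -> : \sum_(j < m.+1 | (r <= j)%N) (bernstein_tail' m j v - bernstein_tail' m j.+1 v) =
    \sum_(r <= j < m.+1) (bernstein_tail' m j v - bernstein_tail' m j.+1 v).
  by rewrite (big_geq_mkord _ _ xpredT).
rewrite (@telescope_sumr_eq _ r m.+1 (fun j => - bernstein_tail' m j v)).
- by rewrite /bernstein_tail' bin_small // muln0 !mul0r oppr0 sub0r opprK.
- exact: leqW.
- by move=> j _; rewrite opprK addrC.
Qed.

Lemma bernstein_ge0 m j v : 0 <= v <= 1 -> 0 <= bernstein m j v.
Proof.
by case/andP=> v0 v1; rewrite /bernstein !mulr_ge0 ?exprn_ge0 ?subr_ge0.
Qed.

Lemma bernstein_gt0 m j v : (j <= m)%N -> 0 < v < 1 -> 0 < bernstein m j v.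
Proof.
move=> jm /andP[v0 v1].
by rewrite /bernstein !mulr_gt0 ?exprn_gt0 ?subr_gt0 // ltr0n bin_gt0.
Qed.

Lemma bernstein_tail_gt0 m r v : (r <= m)%N -> 0 < v < 1 ->
  0 < bernstein_tail m r v.
Proof.
move=> rm v01; rewrite /bernstein_tail (bigD1 ord_max) //=.
rewrite ltr_wpDr ?bernstein_gt0 // sumr_ge0 // => j _.
by apply: bernstein_ge0; case/andP: v01 => /ltW -> /ltW ->.
Qed.

Lemma bernstein_tail'_gt0 m r v : (0 < r <= m)%N -> 0 < v < 1 ->
  0 < bernstein_tail' m r v.
Proof.
case/andP=> r0 rm /andP[v0 v1].
by rewrite /bernstein_tail' !mulr_gt0 ?exprn_gt0 ?subr_gt0 // ltr0n muln_gt0 r0 bin_gt0.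
Qed.

Lemma bernstein_div_tail' m r j v : (0 < r <= j)%N -> (j <= m)%N -> 0 < v < 1 ->
  bernstein m j v / bernstein_tail' m r v =
  'C(m, j)%:R / (r * 'C(m, r))%:R * (v ^+ (j - r.-1) / (1 - v) ^+ (j - r)).
Proof.
move=> /andP[r0 rj] jm /andP[v0 v1].
have Ev : v ^+ j = v ^+ r.-1 * v ^+ (j - r.-1) by rewrite -exprD; congr (_ ^+ _); lia.
have Ew : (1 - v) ^+ (m - r) = (1 - v) ^+ (m - j) * (1 - v) ^+ (j - r).
  by rewrite -exprD; congr (_ ^+ _); lia.
have v_neq0 n : v ^+ n != 0 by rewrite expf_neq0 // gt_eqF.
have w_neq0 n : (1 - v) ^+ n != 0 by rewrite expf_neq0 // gt_eqF // subr_gt0.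
have C_neq0 : 'C(m, r)%:R != 0 :> R by rewrite pnatr_eq0 -lt0n bin_gt0 (leq_trans rj jm).
have r_neq0 : r%:R != 0 :> R by rewrite pnatr_eq0 -lt0n.
rewrite /bernstein /bernstein_tail' Ev Ew natrM.
by field; rewrite !v_neq0 !w_neq0 C_neq0 r_neq0.
Qed.

Lemma bernstein_tail_div_tail'_le m r x y : (0 < r <= m)%N ->
  0 < x -> x <= y -> y < 1 ->
  bernstein_tail m r x / bernstein_tail' m r x <= bernstein_tail m r y / bernstein_tail' m r y.
Proof.
move=> r0m x0 xy y1.
have x01 : 0 < x < 1 by rewrite x0 (le_lt_trans xy).
have y01 : 0 < y < 1 by rewrite y1 (lt_le_trans x0).
rewrite /bernstein_tail !mulr_suml; apply: ler_sum => j rj.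
have [r0 _] := andP r0m.
have jm : (j <= m)%N by rewrite -ltnS.
rewrite !bernstein_div_tail' ?r0 ?rj //.
by rewrite ler_wpM2l ?divr_ge0 // expr_div_subr_expr_le.
Qed.

Lemma mul_bernstein_tail_gt0 (c : R) m r v : (r <= m)%N -> c <= 1 -> 0 < v < c ->
  0 < (c - v) * bernstein_tail m r v.
Proof.
move=> rm c1 /andP[v0 vc].
by rewrite mulr_gt0 ?subr_gt0 ?bernstein_tail_gt0 // v0 (lt_le_trans vc).
Qed.

Lemma strictly_concave_ln_mul_bernstein_tail (q : R) m r : (0 < r <= m)%N -> q <= 1 ->
  strictly_concave_on (fun v => ln ((q - v) * bernstein_tail m r v)) 0 q.
Proof.
move=> r0m q1.
have [_ rm] := andP r0m.
have v01 v : 0 < v < q -> 0 < v < 1 by case/andP=> v0 vq; rewrite v0 (lt_le_trans vq).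
apply: (strictly_concave_on_derive _ (fun v =>
  - (q - v)^-1 + (bernstein_tail m r v / bernstein_tail' m r v)^-1)).
  move=> v v0q.
  have qv : 0 < q - v by rewrite subr_gt0; case/andP: v0q.
  have B_gt0 : 0 < bernstein_tail m r v by rewrite bernstein_tail_gt0 ?v01.
  have B'_gt0 : 0 < bernstein_tail' m r v by rewrite bernstein_tail'_gt0 ?v01.
  have dq : is_derive v 1 (fun x : R => q - x) (-1).
    have := @is_deriveB R R R (cst q) id v 1 0 1 (is_derive_cst _ _ _) (is_derive_id _ _).
    by rewrite sub0r.
  have dqB : is_derive v 1 (fun x => (q - x) * bernstein_tail m r x)
      ((q - v) * bernstein_tail' m r v - bernstein_tail m r v).
    apply: (is_derive_eq (is_deriveM dq (is_derive_bernstein_tail m r v rm))).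
    by rewrite /GRing.scale /= mulrN1 addrC.
  have dln : is_derive v 1 (fun x => ln ((q - x) * bernstein_tail m r x))
      (((q - v) * bernstein_tail m r v)^-1 *
       ((q - v) * bernstein_tail' m r v - bernstein_tail m r v)).
    exact: is_derive_ln_comp dqB (mulr_gt0 qv B_gt0).
  apply: (is_derive_eq dln); field.
  by rewrite !gt_eqF.
move=> x y x0 xy yq.
have x0q : 0 < x < q by rewrite x0 (lt_trans xy yq).
have y0q : 0 < y < q by rewrite yq (lt_trans x0 xy).
apply: ltr_leD.
  by rewrite ltrN2 ltf_pV2 ?posrE ?subr_gt0 ?(lt_trans xy yq) // ltrD2l ltrN2.
rewrite lef_pV2 ?posrE ?divr_gt0 ?bernstein_tail_gt0 ?bernstein_tail'_gt0 ?v01 //.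
by apply: bernstein_tail_div_tail'_le => //; [exact: ltW | case/andP: (v01 y y0q)].
Qed.

End BernsteinTail.

Section PsiBSAA.
Context {R : realType}.

Lemma Bbin_nat r m (v : R) : Bbin (Posz r) m v = bernstein_tail m r v.
Proof. by rewrite /Bbin ltNge le0z_nat /=; apply: eq_bigl => j; rewrite lez_nat. Qed.

Lemma PsiBSAA_bernstein_tail (q : R) {K} (ns : 'I_K -> nat) k :
  q <= 1 -> ((sigma ns k)%:Z < Num.ceil (q * (ntot ns)%:R))%R ->
  exists m r, (0 < r <= m)%N /\ forall v, PsiBSAA q ns k v =
    (1 - bernstein_tail m r v) * (v - q) + Num.max (q - v) 0.
Proof.
rewrite /PsiBSAA; set n := ntot ns; set s := sigma ns k; set c := Num.ceil _.
move=> q1 sc.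
have cn : c <= n%:Z by rewrite /c ceil_le_int -[X in _ <= X]mul1r ler_wpM2r.
have [r cr] : exists r : nat, c = r%:Z.
  by exists `|c|%N; rewrite gez0_abs // (le_trans _ (ltW sc)).
move: sc cn; rewrite cr ltz_nat lez_nat => sr rn.
exists (n - s)%N, (r - s)%N; split; first by apply/andP; split; lia.
by move=> v; rewrite subzn ?Bbin_nat // ltnW.
Qed.

End PsiBSAA.

Theorem lemma3 (R : realType) (cu co : R) (K : nat) (ns : 'I_K -> nat) (k : nat) :
  0 < cu -> 0 < co -> (forall i, (0 < ns i)%N) ->
  let q := cu / (cu + co) in
  (k <= K)%N ->
  ((sigma ns k)%:Z < Num.ceil (q * (ntot ns)%:R))%R ->
  (forall v : R, 0 < v < q -> 0 < PsiBSAA q ns k v) /\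
  (forall v : R, q < v < 1 -> 0 < PsiBSAA q ns k v) /\
  strictly_concave_on (fun v => ln (PsiBSAA q ns k v)) 0 q /\
  strictly_concave_on (fun v => ln (PsiBSAA q ns k v)) q 1.
Proof.
move=> cu_gt0 co_gt0 _ q _ sigma_lt.
have q_gt0 : 0 < q by rewrite divr_gt0 // addr_gt0.
have q_lt1 : q < 1 by rewrite ltr_pdivrMr ?addr_gt0 // mul1r ltrDl.
have [m [r [r0m PsiE]]] := PsiBSAA_bernstein_tail q ns k (ltW q_lt1) sigma_lt.
have r'0m : (0 < m.+1 - r <= m)%N by case/andP: r0m => r0 rm; apply/andP; split; lia.
have Psi_lt v : 0 < v < q -> PsiBSAA q ns k v = (q - v) * bernstein_tail m r v.
  by case/andP=> _ vq; rewrite PsiE max_l ?subr_ge0 ?ltW //; ring.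
have Psi_gt v : q < v < 1 ->
    PsiBSAA q ns k v = (1 - q - (1 - v)) * bernstein_tail m (m.+1 - r) (1 - v).
  case/andP=> qv _; rewrite PsiE max_r ?subr_le0 ?ltW // one_sub_bernstein_tail.
    by rewrite addr0 mulrC; congr (_ * _); ring.
  by case/andP: r0m => _ /leqW.
have [_ rm] := andP r0m; have [_ r'm] := andP r'0m.
have q'1 : 1 - q <= 1 by rewrite lerBlDr lerDl ltW.
split; [|split; [|split]].
- by move=> v v0q; rewrite Psi_lt // mul_bernstein_tail_gt0 // ltW.
- move=> v /andP[qv v1]; rewrite Psi_gt ?qv // mul_bernstein_tail_gt0 //.
  by apply/andP; split; lra.
- apply: (strictly_concave_on_eq _ (fun v => ln ((q - v) * bernstein_tail m r v))).
    by move=> v /Psi_lt ->.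
  exact: strictly_concave_ln_mul_bernstein_tail q m r r0m (ltW q_lt1).
- apply: (strictly_concave_on_eq _
    (fun v => ln ((1 - q - (1 - v)) * bernstein_tail m (m.+1 - r) (1 - v)))).
    by move=> v /Psi_gt ->.
  have := strictly_concave_ln_mul_bernstein_tail (1 - q) m (m.+1 - r) r'0m q'1.
  by move/(strictly_concave_on_reflect _ _ _ 1); rewrite subr0 subKr.
Qed.
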